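(* Let $S_1$ and $S_2$ be two finite collections of nonvertical line segments in the plane with $|S_1\cup S_2|=n$, such that within each $S_i$ no two segments intersect. Then the number of intersection points between a segment of $S_1$ and a segment of $S_2$ that lie on an envelope (lower or upper) of $S_1$ and also on an envelope (lower or upper) of $S_2$ is $O(n)$.
   Context: For a finite collection $S$ of nonvertical segments (viewed as graphs of partial functions $\mathbb R\to\mathbb R$), the lower envelope is the pointwise minimum of these graphs (the parts visible from $y=-\infty$), and the upper envelope is the pointwise maximum (the parts visible from $y=+\infty$). *)

From HB Require Import structures.
From mathcomp Require Import all_boot all_order all_algebra.
From mathcomp Require Import reals.
Set Implicit Arguments. Unset Strict Implicit. Unset Printing Implicit Defensive.
Import Order.TTheory GRing.Theory Num.Theory.
Local Open Scope ring_scope.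

Definition point (R : realType) := (R * R)%type.
Definition seg (R : realType) := (point R * point R)%type.

Definition on_seg (R : realType) (s : seg R) (p : point R) : Prop :=
  exists t : R, 0 <= t /\ t <= 1 /\
    p = (s.1.1 + t * (s.2.1 - s.1.1), s.1.2 + t * (s.2.2 - s.1.2)).

Definition nonvertical (R : realType) (s : seg R) : Prop := s.1.1 != s.2.1.

Definition on_lower_env (R : realType) (S : seq (seg R)) (p : point R) : Prop :=
  (exists2 s, s \in S & on_seg s p) /\
  (forall s q, s \in S -> on_seg s q -> q.1 = p.1 -> p.2 <= q.2).

Definition on_upper_env (R : realType) (S : seq (seg R)) (p : point R) : Prop :=
  (exists2 s, s \in S & on_seg s p) /\
  (forall s q, s \in S -> on_seg s q -> q.1 = p.1 -> q.2 <= p.2).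

Definition on_env (R : realType) (S : seq (seg R)) (p : point R) : Prop :=
  on_lower_env S p \/ on_upper_env S p.

Definition pairwise_disjoint (R : realType) (S : seq (seg R)) : Prop :=
  forall s s' p, s \in S -> s' \in S -> s != s' -> on_seg s p -> on_seg s' p -> False.

Definition red_blue_point (R : realType) (S1 S2 : seq (seg R)) (p : point R) : Prop :=
  exists s1 s2, [/\ s1 \in S1, s2 \in S2, on_seg s1 p & on_seg s2 p].

(* segments of S1 and S2 meet in at most one point (no collinear overlaps) *)
Definition no_overlap (R : realType) (S1 S2 : seq (seg R)) : Prop :=
  forall s1 s2 p q, s1 \in S1 -> s2 \in S2 ->
    on_seg s1 p -> on_seg s2 p -> on_seg s1 q -> on_seg s2 q -> p = q.

From HB Require Import structures.
From mathcomp Require Import all_boot all_order all_algebra.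
From mathcomp Require Import reals boolp ring lra zify.
Set Implicit Arguments. Unset Strict Implicit. Unset Printing Implicit Defensive.
Import Order.TTheory GRing.Theory Num.Theory.

(** Fix one of the four choices of envelopes (lower or upper for S1, lower or
    upper for S2). The points on both chosen envelopes have distinct abscissae;
    list them from left to right and give each one a red segment of S1 and a
    blue segment of S2 through it. Consecutive points differ in their red or
    their blue segment, since a red and a blue segment meet at most once. The
    sequence of red segments has no subsequence a..b..a..b with a <> b: two
    disjoint segments cannot swap their order between two points of the same
    envelope. Hence every step between consecutive points is the last
    occurrence of the outgoing segment or the first occurrence of the incoming
    one, in red or in blue, which gives at most 4n + 1 points per choice. *)

Lemma count_le_size_undup (T U : eqType) (a : pred T) (f : T -> U) (I : seq T)
    (Z : seq U) :
  uniq I -> {in I &, forall i j, a i -> a j -> f i = f j -> i = j} ->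
  {in I, forall i, f i \in Z} -> count a I <= size (undup Z).
Proof.
move=> uI f_inj fZ; rewrite -size_filter -(size_map f).
apply: uniq_leq_size => [|_ /mapP[i + ->]]; last first.
  by rewrite mem_filter mem_undup => /andP[_ /fZ].
rewrite map_inj_in_uniq ?filter_uniq // => i j.
by rewrite !mem_filter => /andP[ai iI] /andP[aj jI]; apply: f_inj.
Qed.

Lemma size_le_sum_count (T : eqType) (A : seq (pred T)) (s : seq T) :
  (forall x, x \in s -> has (fun a => a x) A) ->
  size s <= \sum_(a <- A) count a s.
Proof.
elim: A s => [|a A IH] s cover.
  by case: s cover => // x s /(_ x (mem_head _ _)).
rewrite big_cons -(count_predC a s) leq_add2l -size_filter.
apply: leq_trans (IH _ _) _.
  move=> x; rewrite mem_filter => /andP[nax /cover] /=.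
  by rewrite (negbTE nax).
by apply: leq_sum => b _; rewrite count_filter sub_count // => x /andP[].
Qed.

Section Occurrences.
Variables (S : eqType) (n : nat) (f : nat -> S).

Definition last_occ i := all (fun j => f j != f i) (iota i.+1 (n - i.+1)).
Definition first_occ i := all (fun j => f j != f i) (iota 0 i).

Lemma last_occP i j : last_occ i -> i < j -> j < n -> f j != f i.
Proof. by move=> /allP occ ij jn; apply: occ; rewrite mem_iota; lia. Qed.

Lemma first_occP i j : first_occ i -> j < i -> f j != f i.
Proof. by move=> /allP occ ji; apply: occ; rewrite mem_iota. Qed.

Lemma last_occPn i : ~~ last_occ i -> exists2 j, i < j < n & f j = f i.
Proof.
by case/allPn => j; rewrite mem_iota negbK => ij /eqP; exists j => //; lia.
Qed.

Lemma first_occPn i : ~~ first_occ i -> exists2 j, j < i & f j = f i.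
Proof. by case/allPn => j; rewrite mem_iota negbK => ij /eqP; exists j. Qed.

Lemma count_last_occ (I : seq nat) (Z : seq S) :
  uniq I -> {in I, forall i, i < n /\ f i \in Z} ->
  count last_occ I <= size (undup Z).
Proof.
move=> uI IZ; apply: (count_le_size_undup (f := f)) => // [i j iI jI li lj fij|i /IZ[]//].
case: (ltngtP i j) => // [ij|ji].
  by move: (last_occP li ij (proj1 (IZ j jI))); rewrite fij eqxx.
by move: (last_occP lj ji (proj1 (IZ i iI))); rewrite fij eqxx.
Qed.

Lemma count_first_occ (I : seq nat) (Z : seq S) :
  uniq I -> {in I, forall i, f i \in Z} -> count first_occ I <= size (undup Z).
Proof.
move=> uI IZ; apply: (count_le_size_undup (f := f)) => // i j _ _ fi fj fij.
case: (ltngtP i j) => // [ij|ji].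
  by move: (first_occP fj ij); rewrite fij eqxx.
by move: (first_occP fi ji); rewrite fij eqxx.
Qed.

Definition abab_free := forall k i i' j, k < i -> i < i' -> i' < j -> j < n ->
  f k = f i' -> f i = f j -> f i = f k.

Lemma abab_free_change i : abab_free -> i.+1 < n -> f i != f i.+1 ->
  last_occ i || first_occ i.+1.
Proof.
move=> abab lin fi; apply/negPn/negP; rewrite negb_or => /andP[].
move=> /last_occPn[j /andP[ij jn] fj] /first_occPn[k ki fk].
have ji : j != i.+1 by apply: contra_neq fi => ji; rewrite -fj ji.
have ki' : k != i by apply: contra_neq fi => ki'; rewrite -fk ki'.
have ki_i : k < i by rewrite ltn_neqAle ki' -ltnS.
have ij' : i.+1 < j by rewrite ltn_neqAle eq_sym ji.
have fik : f i = f k := abab k i i.+1 j ki_i (ltnSn i) ij' jn fk (esym fj).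
by move: fi; rewrite fik fk eqxx.
Qed.

End Occurrences.

Lemma abab_free_pair_bound (S : eqType) (n : nat) (r b : nat -> S) (Z : seq S) :
  abab_free n r -> abab_free n b ->
  (forall i, i.+1 < n -> (r i != r i.+1) || (b i != b i.+1)) ->
  (forall i, i < n -> r i \in Z /\ b i \in Z) ->
  n.-1 <= 4 * size (undup Z).
Proof.
move=> abab_r abab_b change rbZ.
pose I := iota 0 n.-1.
have uI : uniq I := iota_uniq 0 n.-1.
have lt_n i : i \in I -> i < n /\ i.+1 < n by rewrite mem_iota; lia.
have cover : forall i, i \in I -> has (fun a : pred nat => a i)
    [:: last_occ n r; first_occ r \o succn; last_occ n b; first_occ b \o succn].
  move=> i /lt_n[_ lin] /=; case/orP: (change i lin) => [/(abab_free_change abab_r lin)|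
    /(abab_free_change abab_b lin)] /orP[] ->; rewrite ?orbT //.
have := size_le_sum_count cover; rewrite size_iota => /leq_trans; apply.
rewrite !big_cons big_nil addn0 !mulSn mul0n addn0 !addnA.
have count_first g : (forall i, i < n -> g i \in Z) ->
    count (first_occ g \o succn) I <= size (undup Z).
  move=> gZ; rewrite -count_map; apply: count_first_occ.
    by rewrite (map_inj_uniq succn_inj).
  by move=> _ /mapP[i /lt_n[_ /gZ gZ'] ->].
have count_last g : (forall i, i < n -> g i \in Z) ->
    count (last_occ n g) I <= size (undup Z).
  by move=> gZ; apply: count_last_occ => // i /lt_n[i_n _]; rewrite i_n gZ.
by rewrite !leq_add ?count_first ?count_last // => i /rbZ[].
Qed.

Section Geometry.
Variable R : realType.
Local Open Scope ring_scope.
Implicit Types (s a b : seg R) (S : seq (seg R)) (p q : point R) (sg : R).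

Definition interp p q (t : R) : point R :=
  (p.1 + t * (q.1 - p.1), p.2 + t * (q.2 - p.2)).

Lemma on_seg_interp s p q t : on_seg s p -> on_seg s q -> 0 <= t <= 1 ->
  on_seg s (interp p q t).
Proof.
move=> [tp [tp0 [tp1 ->]]] [tq [tq0 [tq1 ->]]] /andP[t0 t1].
exists (tp + t * (tq - tp)); split; [nra | split; [nra |]].
by rewrite /interp /=; congr (_, _); ring.
Qed.

Lemma on_seg_at_x s p q (x : R) : on_seg s p -> on_seg s q -> p.1 <= x <= q.1 ->
  exists2 r, on_seg s r & r.1 = x.
Proof.
move=> sp sq /andP[px xq]; have [pq | pq] := eqVneq p.1 q.1.
  by exists p => //; apply/eqP; rewrite eq_le px pq xq.
have pq_gt0 : 0 < q.1 - p.1 by rewrite subr_gt0 lt_neqAle pq (le_trans px xq).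
exists (interp p q ((x - p.1) / (q.1 - p.1))).
  apply: on_seg_interp => //; apply/andP; split.
    by apply: divr_ge0; lra.
  by rewrite ler_pdivrMr // mul1r; lra.
by rewrite /interp /= divfK ?gt_eqF //; ring.
Qed.

Lemma on_seg_cross a b u1 u2 v1 v2 :
  on_seg a u1 -> on_seg a u2 -> on_seg b v1 -> on_seg b v2 ->
  u1.1 = v1.1 -> u2.1 = v2.1 -> (u1.2 - v1.2) * (u2.2 - v2.2) <= 0 ->
  exists p, on_seg a p /\ on_seg b p.
Proof.
move=> au1 au2 bv1 bv2 x1 x2; set d1 := u1.2 - v1.2; set d2 := u2.2 - v2.2 => d12.
have [d1_0 | d1_neq0] := eqVneq d1 0.
  have y1 : u1.2 = v1.2 by apply/eqP; rewrite -subr_eq0 -/d1 d1_0.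
  have u1v1 : u1 = v1 by move: x1 y1; case: (u1) (v1) => ? ? [? ?] /= -> ->.
  by exists u1; rewrite {2}u1v1.
have d11_gt0 : 0 < d1 * d1 by rewrite -expr2 exprn_even_gt0.
have den_gt0 : 0 < d1 * d1 - d1 * d2 by lra.
(* The crossing parameter d1 / (d1 - d2), with both terms multiplied by d1 to
   make them visibly positive. *)
pose t := d1 * d1 / (d1 * d1 - d1 * d2).
have t01 : 0 <= t <= 1.
  by apply/andP; split; [apply: divr_ge0 | rewrite ler_pdivrMr // mul1r]; lra.
exists (interp u1 u2 t); split; first exact: on_seg_interp.
suff -> : interp u1 u2 t = interp v1 v2 t by apply: on_seg_interp.
rewrite /interp x1 x2; congr (_, _).
have : t * (d1 - d2) = d1 by rewrite /t; field; rewrite gt_eqF.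
by rewrite /d1 /d2 => ?; lra.
Qed.

Definition extremal S (sg : R) p :=
  forall s q, s \in S -> on_seg s q -> q.1 = p.1 -> sg * p.2 <= sg * q.2.

Lemma on_env_extremal S p : on_env S p -> extremal S 1 p \/ extremal S (-1) p.
Proof.
case=> [[_ low] | [_ up]]; [left | right] => s q sS sq qp.
  by rewrite !mul1r; apply: low sq qp.
by rewrite !mulN1r lerN2; apply: up sq qp.
Qed.

Lemma extremal_same_x S sg p q : sg != 0 ->
  extremal S sg p -> extremal S sg q ->
  (exists2 s, s \in S & on_seg s p) -> (exists2 s, s \in S & on_seg s q) ->
  p.1 = q.1 -> p = q.
Proof.
move=> sg0 ext_p ext_q [s sS sp] [s' s'S s'q] pq.
have : sg * p.2 = sg * q.2.
  by apply/eqP; rewrite eq_le (ext_p _ _ s'S s'q) ?(ext_q _ _ sS sp).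
by move/(mulfI sg0); move: pq; case: (p) (q) => ? ? [? ?] /= -> ->.
Qed.

Lemma extremal_abab S sg a b p1 p2 p3 p4 : sg != 0 -> pairwise_disjoint S ->
  a \in S -> b \in S ->
  on_seg a p1 -> on_seg b p2 -> on_seg a p3 -> on_seg b p4 ->
  p1.1 <= p2.1 <= p3.1 -> p3.1 <= p4.1 ->
  extremal S sg p2 -> extremal S sg p3 -> a = b.
Proof.
move=> sg0 disj aS bS ap1 bp2 ap3 bp4 /andP[x12 x23] x34 ext2 ext3.
have [a2 aa2 a2x] := on_seg_at_x ap1 ap3 (x := p2.1) ltac:(by rewrite x12 x23).
have [b3 bb3 b3x] := on_seg_at_x bp2 bp4 (x := p3.1) ltac:(by rewrite x23 x34).
(* At abscissa p2.1 segment a is weakly beyond b, at p3.1 b is weakly beyond a. *)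
have above2 := ext2 _ _ aS aa2 a2x.
have above3 := ext3 _ _ bS bb3 b3x.
have sg2_gt0 : 0 < sg * sg by rewrite -expr2 exprn_even_gt0.
have [|p [ap bp]] := on_seg_cross aa2 ap3 bp2 bb3 a2x (esym b3x).
  by nra.
by apply/eqP/negPn/negP => ab; apply: (disj a b p aS bS ab ap bp).
Qed.

Definition ltx : rel (point R) := fun p q => p.1 < q.1.

Lemma sort_by_x (Q : seq (point R)) : uniq Q ->
  {in Q &, forall p q, p.1 = q.1 -> p = q} ->
  exists2 L, perm_eq L Q & pairwise ltx L.
Proof.
move=> uQ x_inj; pose L := sort (fun p q : point R => p.1 <= q.1) Q.
have LQ : L =i Q := mem_sort _ Q.
exists L; first by rewrite perm_sort.
have neqL : pairwise [rel p q | p != q] L by rewrite -uniq_pairwise sort_uniq.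
have leL : pairwise (fun p q : point R => p.1 <= q.1) L.
  rewrite -sorted_pairwise; last by move=> ? ? ?; apply: le_trans.
  by apply: sort_sorted => ? ?; apply: le_total.
apply: (@sub_in_pairwise _ (mem L) [rel p q | (p != q) && (p.1 <= q.1)]).
- move=> p q pL qL /andP[pq le_pq]; rewrite /ltx lt_neqAle le_pq andbT.
  by apply: contra_neq pq; apply: x_inj; rewrite -LQ.
- exact/allP.
- by rewrite pairwise_relI neqL leL.
Qed.

Lemma colouring S (Q : seq (point R)) :
  {in Q, forall p, exists2 s, s \in S & on_seg s p} ->
  {col : point R -> seg R & {in Q, forall p, col p \in S /\ on_seg (col p) p}}.
Proof.
move=> QS; apply: (choice (P := fun p s => p \in Q -> s \in S /\ on_seg s p)) => p.
have [/QS[s sS sp]|_] := boolP (p \in Q).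
  by exists s.
by exists 0.
Qed.

Lemma extremal_colouring_abab_free S sg (L : seq (point R)) (col : point R -> seg R) :
  sg != 0 -> pairwise_disjoint S -> pairwise ltx L ->
  {in L, forall p, col p \in S /\ on_seg (col p) p} -> {in L, forall p, extremal S sg p} ->
  abab_free (size L) (fun i => col (nth 0 L i)).
Proof.
move=> sg0 disj ltL colL extL k i i' j ki ii' i'j jL /= ck ci.
have inL m : (m < size L)%N -> nth 0 L m \in L by apply: mem_nth.
have le_x m m' : (m < m')%N -> (m' < size L)%N -> (nth 0 L m).1 <= (nth 0 L m').1.
  by move=> mm' m'L; apply/ltW/(pairwiseP 0 ltL); rewrite //= inE (ltn_trans mm').
have [kS kon] := colL _ (inL k ltac:(lia)).
have [iS ion] := colL _ (inL i ltac:(lia)).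
have [_ i'on] := colL _ (inL i' ltac:(lia)).
have [_ jon] := colL _ (inL j jL).
rewrite -ck in i'on; rewrite -ci in jon.
have x_order : (nth 0 L k).1 <= (nth 0 L i).1 <= (nth 0 L i').1.
  by rewrite !le_x //; lia.
symmetry; apply: (extremal_abab sg0 disj kS iS kon ion i'on jon x_order (le_x _ _ i'j jL)).
  by apply/extL/inL; lia.
by apply/extL/inL; lia.
Qed.

Lemma red_blue_colouring_change S1 S2 (L : seq (point R)) (red blue : point R -> seg R) :
  no_overlap S1 S2 -> pairwise ltx L ->
  {in L, forall p, red p \in S1 /\ on_seg (red p) p} ->
  {in L, forall p, blue p \in S2 /\ on_seg (blue p) p} ->
  forall i, (i.+1 < size L)%N ->
    (red (nth 0 L i) != red (nth 0 L i.+1)) || (blue (nth 0 L i) != blue (nth 0 L i.+1)).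
Proof.
move=> no ltL redL blueL i iL; rewrite -negb_and; apply/negP => /andP[/eqP rr /eqP bb].
have inL m : (m < size L)%N -> nth 0 L m \in L by apply: mem_nth.
have [rS ron] := redL _ (inL i ltac:(lia)); have [bS bon] := blueL _ (inL i ltac:(lia)).
have [_ ron'] := redL _ (inL i.+1 iL); have [_ bon'] := blueL _ (inL i.+1 iL).
rewrite -rr in ron'; rewrite -bb in bon'.
have := pairwiseP 0 ltL i i.+1 (ltnW iL) iL (ltnSn i).
by rewrite /ltx (no _ _ _ _ rS bS ron bon ron' bon') ltxx.
Qed.

Lemma extremal_red_blue_bound S1 S2 sg1 sg2 (Q : seq (point R)) :
  sg1 != 0 -> sg2 != 0 -> pairwise_disjoint S1 -> pairwise_disjoint S2 ->
  no_overlap S1 S2 -> uniq Q ->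
  {in Q, forall p, [/\ red_blue_point S1 S2 p, extremal S1 sg1 p & extremal S2 sg2 p]} ->
  (size Q <= (4 * size (undup (S1 ++ S2))).+1)%N.
Proof.
move=> sg1_0 sg2_0 disj1 disj2 no uQ HQ.
have [red redQ] : {red : point R -> seg R & {in Q, forall p, red p \in S1 /\ on_seg (red p) p}}.
  by apply: colouring => p /HQ[[s1 [s2 [? ? ? ?]]] _ _]; exists s1.
have [blue blueQ] : {blue : point R -> seg R & {in Q, forall p, blue p \in S2 /\ on_seg (blue p) p}}.
  by apply: colouring => p /HQ[[s1 [s2 [? ? ? ?]]] _ _]; exists s2.
have [L QL ltL] : exists2 L, perm_eq L Q & pairwise ltx L.
  apply: sort_by_x => // p q pQ qQ.
  have [[_ ext_p _] [_ ext_q _]] := (HQ p pQ, HQ q qQ).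
  apply: (extremal_same_x sg1_0 ext_p ext_q).
    by have [] := redQ p pQ; exists (red p).
  by have [] := redQ q qQ; exists (red q).
have onL (P : point R -> Prop) : {in Q, forall p, P p} -> {in L, forall p, P p}.
  by move=> PQ p; rewrite (perm_mem QL); apply: PQ.
have bound : ((size L).-1 <= 4 * size (undup (S1 ++ S2)))%N.
  apply: abab_free_pair_bound.
  - apply: extremal_colouring_abab_free sg1_0 disj1 ltL (onL _ redQ) _.
    by apply: onL => p /HQ[].
  - apply: extremal_colouring_abab_free sg2_0 disj2 ltL (onL _ blueQ) _.
    by apply: onL => p /HQ[].
  - exact: red_blue_colouring_change no ltL (onL _ redQ) (onL _ blueQ).
  - move=> i iL; have iQ : nth 0 L i \in Q by rewrite -(perm_mem QL) mem_nth.
    by rewrite !mem_cat (proj1 (redQ _ iQ)) (proj1 (blueQ _ iQ)) orbT.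
by rewrite -(perm_size QL); lia.
Qed.

End Geometry.

Local Open Scope ring_scope.

Theorem lemma1 : exists C : nat,
  forall (R : realType) (S1 S2 : seq (seg R)),
    (forall s, s \in S1 ++ S2 -> nonvertical s) ->
    pairwise_disjoint S1 -> pairwise_disjoint S2 ->
    no_overlap S1 S2 ->
    forall P : seq (point R), uniq P ->
      (forall p, p \in P ->
         [/\ red_blue_point S1 S2 p, on_env S1 p & on_env S2 p]) ->
      (size P <= C * size (undup (S1 ++ S2)))%N.
Proof.
exists 20%N => R S1 S2 _ disj1 disj2 no P uP HP.
set N := size (undup (S1 ++ S2)).
case: P uP HP => [//|p0 P'] uP HP; set P := p0 :: P' in uP HP *.
have N_gt0 : (0 < N)%N.
  have [[s1 [s2 [s1S _ _ _]]] _ _] := HP p0 (mem_head _ _).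
  have : s1 \in undup (S1 ++ S2) by rewrite mem_undup mem_cat s1S.
  by rewrite /N; case: (undup _).
pose c (sg1 sg2 : R) p := `[< extremal S1 sg1 p /\ extremal S2 sg2 p >].
have count_c (sg1 sg2 : R) : sg1 != 0 -> sg2 != 0 -> (count (c sg1 sg2) P <= (4 * N).+1)%N.
  move=> sg1_0 sg2_0; rewrite -size_filter.
  apply: (extremal_red_blue_bound sg1_0 sg2_0 disj1 disj2 no (filter_uniq _ uP)) => p.
  by rewrite mem_filter => /andP[/asboolP[e1 e2] /HP[]].
have cover p : p \in P -> has (fun a => a p) [:: c 1 1; c 1 (-1); c (-1) 1; c (-1) (-1)].
  have c_of (sg1 sg2 : R) : extremal S1 sg1 p -> extremal S2 sg2 p -> c sg1 sg2 p.
    by move=> e1 e2; apply/asboolP.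
  by move=> /HP[_ /on_env_extremal[e1|e1] /on_env_extremal[e2|e2]] /=;
    rewrite (c_of _ _ e1 e2) ?orbT.
have one0 : (1 : R) != 0 := oner_neq0 R.
have mone0 : (-1 : R) != 0 by rewrite oppr_eq0.
apply: leq_trans (size_le_sum_count cover) _; rewrite !big_cons big_nil addn0.
apply: leq_trans (leq_add (count_c _ _ one0 one0) (leq_add (count_c _ _ one0 mone0)
  (leq_add (count_c _ _ mone0 one0) (count_c _ _ mone0 mone0)))) _.
lia.
Qed.
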